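(* For any time complexity function $t$, $$\mathrm{IP}(\mathrm{constant\ space},\ \infty\ \mathrm{private\ random\ bits},\ \infty\ \mathrm{public\ random\ bits},\ O(t(n))\ \mathrm{time})\subseteq\mathrm{IP}(\mathrm{constant\ space},\ O(n)\ \mathrm{private\ random\ bits},\ O(n)\ \mathrm{public\ random\ bits},\ O(n)\ \mathrm{time}),$$ and the same inclusion holds for the $\mathrm{IP}^{\mathrm{high}}$ variants of the two classes.
   Context: Interactive proof systems. A verifier is a probabilistic Turing machine with a read-only input tape containing $\rhd w\lhd$, a read-write work tape, and a read-write communication cell shared with a prover. Its states may flip private coins (fair random bits hidden from the prover), flip public coins (fair random bits revealed to the prover; public-coin states are communication states), and/or write to the communication cell. In each step, based on the state, scanned symbols and coin outcomes, it changes state, writes on the work tape, writes to the communication cell (if in a communication state), and moves its heads. Each time the verifier writes to the communication cell, the prover overwrites it with a symbol that is an arbitrary function of $w$, the history of public coin outcomes, and the communication symbols so far. The verifier halts on entering accept/reject; it may run forever. $V$ verifies $L$ with error $\varepsilon=\max(\varepsilon^+,\varepsilon^-)$, $\varepsilon^\pm<1/2$, if some prover makes $V$ accept every $w\in L$ with probability at least $1-\varepsilon^+$, and for every prover and every $w\notin L$, $V$ halts and rejects with probability at least $1-\varepsilon^-$. $\mathrm{IP}^{\mathrm{high}}(\ldots)$ is the class of languages verifiable with some error $\varepsilon<1/2$ by verifiers within the listed resource bounds; $\mathrm{IP}(\ldots)$ is the class of languages verifiable with arbitrarily low error (for every $\varepsilon>0$ there is a verifier within the bounds with error at most $\varepsilon$).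 All bounds here are worst-case functions of the input length $n$; constant space means $O(1)$ work-tape cells; $\infty$ means no bound. *)

From mathcomp Require Import all_boot.
From Stdlib Require Import Reals.

Set Implicit Arguments.
Unset Strict Implicit.
Unset Printing Implicit Defensive.

(* Symbols of the read-only input tape |> w <| *)
Inductive tsym (S : Type) := LEnd | REnd | Sym of S.
Arguments LEnd {S}. Arguments REnd {S}.

Inductive mv := MvL | MvS | MvR.

(* Content of input cell i of |> w <| : cell 0 is |>, cells 1..n hold w,
   cell n+1 is <|. *)
Definition inp (S : Type) (w : seq S) (i : nat) : tsym S :=
  if i == 0 then LEnd else
  match drop i.-1 w with a :: _ => Sym a | [::] => REnd end.

(* input head stays on cells 0 .. n+1 *)
Definition move_in (n i : nat) (m : mv) : nat :=
  match m with MvL => i.-1 | MvS => i | MvR => minn i.+1 n.+1 end.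

(* work tape is one-way infinite: cells 0,1,2,... *)
Definition move_w (i : nat) (m : mv) : nat :=
  match m with MvL => i.-1 | MvS => i | MvR => i.+1 end.

Record verifier (Sigma : Type) := Verifier {
  vQ : finType;
  vG : finType;                 (* work tape alphabet *)
  vC : finType;                 (* communication alphabet *)
  vq0 : vQ;
  vacc : vQ;
  vrej : vQ;
  vacc_rej : vacc != vrej;
  vpriv : vQ -> bool;           (* state flips a private coin *)
  vpub : vQ -> bool;            (* state flips a public coin *)
  vcomm : vQ -> bool;
  vpub_comm : forall q, vpub q -> vcomm q;
  vblank : vG;
  vcblank : vC;                 (* initial content of the communication cell *)
  (* transition: state, scanned input symbol, scanned work symbol, scanned
     communication symbol, private coin, public coin  |->
     new state, work symbol written, communication symbol written (only
     effective in communication states), input head move, work head move *)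
  vdelta : vQ -> tsym Sigma -> vG -> vC -> bool -> bool ->
           vQ * vG * vC * mv * mv
}.

(* A prover: the reply written into the communication cell is an arbitrary
   function of the input w, the history of public coin outcomes, and the
   sequence of symbols the verifier has written so far. *)
Definition prover (Sigma : Type) (V : verifier Sigma) :=
  seq Sigma -> seq bool -> seq (vC V) -> vC V.

Record config (Sigma : Type) (V : verifier Sigma) := Config {
  cq : vQ V;
  cih : nat;                    (* input head position *)
  ctape : nat -> vG V;
  cwh : nat;                    (* work head position *)
  ccell : vC V;
  cpub : seq bool;
  chist : seq (vC V);           (* symbols written by the verifier *)
  csteps : nat;
  cprivs : nat;
  cpubs : nat
}.

Section Semantics.
Variables (Sigma : Type) (V : verifier Sigma).

Definition init : config V :=
  @Config Sigma V (vq0 V) 0 (fun _ => vblank V) 0 (vcblank V) [::] [::] 0 0 0.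

Definition halted (c : config V) : bool :=
  (cq c == vacc V) || (cq c == vrej V).

(* One step with coin outcomes bp (private) and bq (public); the coins are
   only used if the current state actually flips them. *)
Definition step (w : seq Sigma) (P : prover V) (c : config V)
    (bp bq : bool) : config V :=
  let q := cq c in
  let bp' := vpriv q && bp in
  let bq' := vpub q && bq in
  let '(q', g', x', m1, m2) :=
    vdelta q (inp w (cih c)) (ctape c (cwh c)) (ccell c) bp' bq' in
  let pub' := if vpub q then rcons (cpub c) bq' else cpub c in
  let hist' := if vcomm q then rcons (chist c) x' else chist c in
  let cell' := if vcomm q then P w pub' hist' else ccell c in
  @Config Sigma V q' (move_in (size w) (cih c) m1)
    (fun j => if j == cwh c then g' else ctape c j)
    (move_w (cwh c) m2) cell' pub' hist'
    (csteps c).+1 (cprivs c + vpriv q) (cpubs c + vpub q).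

Inductive reach (w : seq Sigma) (P : prover V) : config V -> Prop :=
| reach0 : reach w P init
| reachS c bp bq : reach w P c -> ~~ halted c -> reach w P (step w P c bp bq).

Fixpoint hit_within (w : seq Sigma) (P : prover V) (goal : vQ V)
    (T : nat) (c : config V) : R :=
  match T with
  | 0 => if cq c == goal then 1%R else 0%R
  | T'.+1 =>
      if halted c then (if cq c == goal then 1%R else 0%R)
      else (/4 * (hit_within w P goal T' (step w P c false false)
                + hit_within w P goal T' (step w P c false true)
                + hit_within w P goal T' (step w P c true false)
                + hit_within w P goal T' (step w P c true true)))%R
  end.

End Semantics.

(* The (monotone) limit of f is at least p. *)
Definition prob_at_least (f : nat -> R) (p : R) : Prop :=
  forall d : R, (0 < d)%R -> exists T, (p - d <= f T)%R.

Definition verifies (Sigma : Type) (V : verifier Sigma)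
    (L : seq Sigma -> Prop) (ep em : R) : Prop :=
  (ep < 1/2)%R /\ (em < 1/2)%R /\
  (forall w, L w -> exists P : prover V,
      prob_at_least (fun T => hit_within w P (vacc V) T (init V)) (1 - ep)) /\
  (forall w, ~ L w -> forall P : prover V,
      prob_at_least (fun T => hit_within w P (vrej V) T (init V)) (1 - em)).

Definition bigO (g f : nat -> nat) : Prop :=
  exists k n0, forall n, n0 <= n -> g n <= k * f n.

(* worst-case (over inputs of length n, provers, coin outcomes) bound on a
   resource measured on reachable configurations; None = no bound (infinity) *)
Definition within (Sigma : Type) (V : verifier Sigma)
    (meas : config V -> nat) (b : option (nat -> nat)) : Prop :=
  match b with
  | None => True
  | Some f => exists g, bigO g f /\
      forall w (P : prover V) c, reach w P c -> meas c <= g (size w)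
  end.

Record bounds := Bounds {
  bspace : option (nat -> nat);
  bpriv : option (nat -> nat);
  bpub : option (nat -> nat);
  btime : option (nat -> nat)
}.

Definition within_bounds (Sigma : Type) (V : verifier Sigma) (b : bounds) :=
  within (@cwh _ V) (bspace b) /\ within (@cprivs _ V) (bpriv b) /\
  within (@cpubs _ V) (bpub b) /\ within (@csteps _ V) (btime b).

Definition IP_high (Sigma : Type) (b : bounds) (L : seq Sigma -> Prop) :=
  exists V : verifier Sigma, within_bounds V b /\
    exists ep em, verifies V L ep em.

Definition IP (Sigma : Type) (b : bounds) (L : seq Sigma -> Prop) :=
  forall eps : R, (0 < eps)%R -> exists V : verifier Sigma,
    within_bounds V b /\
    exists ep em, (ep <= eps)%R /\ (em <= eps)%R /\ verifies V L ep em.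

Definition const_space : option (nat -> nat) := Some (fun _ => 1).

Definition left_bounds (t : nat -> nat) : bounds :=
  Bounds const_space None None (Some t).

Definition right_bounds : bounds :=
  Bounds const_space (Some (fun n => n)) (Some (fun n => n)) (Some (fun n => n)).

From mathcomp Require Import all_boot zify.
From Stdlib Require Import Reals.

Set Implicit Arguments.
Unset Strict Implicit.
Unset Printing Implicit Defensive.

(* The same verifier witnesses both inclusions.  With a work tape of constant
   size B, a verifier has only O(n) local configurations (state, input head,
   work tape cells 0..B, work head, communication cell).  If a run were at
   least that long, some local configuration would repeat; as a prover's reply
   depends only on the history, which keeps growing, some prover makes the
   verifier go round that loop any number of times, contradicting the finite
   time bound.  So every run is linear, and so are the numbers of coins. *)

Lemma exists_repeat (T : finType) (f : nat -> T) m :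
  #|T| <= m -> exists a b, [/\ a < b, b <= m & f a = f b].
Proof.
move=> le_T_m.
have /injectivePn [i [j neq_ij eq_fij]] : ~~ injectiveb (fun i : 'I_m.+1 => f i).
  by apply/injectiveP => /leq_card; rewrite card_ord; lia.
have lt_i := ltn_ord i; have lt_j := ltn_ord j.
case: (ltngtP i j) => [lt_ij | lt_ji | eq_ij].
- by exists i, j.
- by exists j, i.
- by move: neq_ij; rewrite (val_inj eq_ij) eqxx.
Qed.

Lemma cycle_indexS a b k : a < b ->
  a + k.+1 %% (b - a) =
  if (a + k %% (b - a)).+1 == b then a else (a + k %% (b - a)).+1.
Proof.
move=> lt_ab; have L_gt0 : 0 < b - a by rewrite subn_gt0.
have lt_mod := ltn_pmod k L_gt0.
rewrite -addn1 -modnDml addn1; case: eqP => [end_b | /eqP ne_b].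
- have -> : (k %% (b - a)).+1 = b - a by lia.
  by rewrite modnn addn0.
- by rewrite modn_small ?addnS //; lia.
Qed.

Section Verifier.
Variables (Sigma : Type) (V : verifier Sigma).

Section Step.
Variables (w : seq Sigma) (P : prover V) (c : config V) (bp bq : bool).

Lemma step_csteps : csteps (step w P c bp bq) = (csteps c).+1.
Proof. by rewrite /step; case: vdelta => [[[[q g] x] m1] m2]. Qed.

Lemma step_cprivs : cprivs (step w P c bp bq) = cprivs c + vpriv (cq c).
Proof. by rewrite /step; case: vdelta => [[[[q g] x] m1] m2]. Qed.

Lemma step_cpubs : cpubs (step w P c bp bq) = cpubs c + vpub (cq c).
Proof. by rewrite /step; case: vdelta => [[[[q g] x] m1] m2]. Qed.

Lemma size_step_chist :
  size (chist (step w P c bp bq)) = size (chist c) + vcomm (cq c).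
Proof.
rewrite /step; case: vdelta => [[[[q g] x] m1] m2] /=.
by case: vcomm; rewrite ?size_rcons ?addn1 ?addn0.
Qed.

End Step.

(* An outcome of a step: private coin, public coin, reply of the prover. *)
Definition outcome := (bool * bool * vC V)%type.

Definition agree (B : nat) (c c' : config V) :=
  [/\ cq c = cq c', cih c = cih c', cwh c = cwh c', ccell c = ccell c'
   & forall i, i <= B -> ctape c i = ctape c' i].

Lemma agree_refl B c : agree B c c.
Proof. by []. Qed.

Lemma agree_trans B c1 c2 c3 : agree B c1 c2 -> agree B c2 c3 -> agree B c1 c3.
Proof.
case=> eq_q eq_ih eq_wh eq_cell eq_tape [? ? ? ? eq_tape'].
split; try congruence.
by move=> i le_iB; rewrite eq_tape // eq_tape'.
Qed.

Lemma halted_agree B c c' : agree B c c' -> halted c = halted c'.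
Proof. by rewrite /halted; case=> ->. Qed.

Definition local_config (n B : nat) : finType :=
  (vQ V * 'I_n.+2 * {ffun 'I_B.+1 -> vG V} * 'I_B.+1 * vC V)%type.

Definition local_view (n B : nat) (c : config V) : local_config n B :=
  (cq c, inord (cih c), [ffun i : 'I_B.+1 => ctape c i], inord (cwh c), ccell c).

Lemma card_local_config n B :
  #|local_config n B| = #|vQ V| * n.+2 * expn #|vG V| B.+1 * B.+1 * #|vC V|.
Proof. by rewrite /local_config !card_prod card_ffun !card_ord. Qed.

Lemma agree_local_view n B c c' :
  cih c <= n.+1 -> cih c' <= n.+1 -> cwh c <= B -> cwh c' <= B ->
  local_view n B c = local_view n B c' -> agree B c c'.
Proof.
move=> le_ih le_ih' le_wh le_wh'.
rewrite /local_view; case=> eq_q eq_ih eq_tape eq_wh eq_cell.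
split=> //.
- by have := congr1 (@nat_of_ord n.+2) eq_ih; rewrite !inordK.
- by have := congr1 (@nat_of_ord B.+1) eq_wh; rewrite !inordK.
- move=> i le_iB.
  have := congr1 (fun f : {ffun 'I_B.+1 -> vG V} => f (inord i)) eq_tape.
  by rewrite !ffunE inordK.
Qed.

Section Input.
Variable w : seq Sigma.

Definition step_reply (c : config V) (o : outcome) : config V :=
  step w (fun _ _ _ => o.2) c o.1.1 o.1.2.

Lemma step_replyE (P : prover V) (c : config V) bp bq :
  step w P c bp bq = step_reply c (bp, bq, ccell (step w P c bp bq)).
Proof.
rewrite /step_reply /step /=; case: vdelta => [[[[q g] x] m1] m2] /=.
by case: vcomm.
Qed.

Lemma agree_step_reply B c c' o :
  cwh c <= B -> agree B c c' -> agree B (step_reply c o) (step_reply c' o).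
Proof.
case: c c' => q ih tp wh cl ? ? ? ? ? [q' ih' tp' wh' cl' ? ? ? ? ?] /= le_wh.
case=> /= <- <- <- <- eq_tape.
rewrite /step_reply /step /= -(eq_tape _ le_wh).
case: vdelta => [[[[q2 g] x] m1] m2]; split=> //= i le_iB.
by case: (i == wh); rewrite ?eq_tape.
Qed.

Definition reachable (c : config V) := exists P : prover V, reach w P c.

Lemma reach_prover_ext (P P' : prover V) c : reach w P c ->
  (forall pub h, size h <= size (chist c) -> P w pub h = P' w pub h) ->
  reach w P' c.
Proof.
elim=> [|d bp bq _ IH not_halted] eqP'; first exact: reach0.
have size_hist := size_step_chist w P d bp bq.
have -> : step w P d bp bq = step w P' d bp bq.
  move: eqP' size_hist; rewrite /step; case: vdelta => [[[[q g] x] m1] m2] /=.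
  by case: vcomm => /= eqP' size_hist //; rewrite eqP'.
by apply: reachS => //; apply: IH => pub h le_h; apply: eqP'; lia.
Qed.

(* The prover is patched on the histories one longer than that of [c] only;
   they do not occur before [c], and the next step needs just one of them. *)
Lemma reachable_step_reply c o :
  reachable c -> ~~ halted c -> reachable (step_reply c o).
Proof.
case: o => [[bp bq] x] [P reach_c] not_halted.
pose P' := fun w0 pub (h : seq (vC V)) =>
  if size h == (size (chist c)).+1 then x else P w0 pub h.
exists P'.
have reach_c' : reach w P' c.
  apply: (@reach_prover_ext P P' c reach_c) => pub h le_h.
  by rewrite /P'; case: eqP => //; lia.
have -> : step_reply c (bp, bq, x) = step w P' c bp bq.
  rewrite /step_reply /step /P' /=; case: vdelta => [[[[q g] x'] m1] m2] /=.
  by case: vcomm => //=; rewrite size_rcons eqxx.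
exact: reachS.
Qed.

Lemma reach_cih (P : prover V) (c : config V) :
  reach w P c -> cih c <= (size w).+1.
Proof.
elim=> //= d bp bq _ IH _; rewrite /step; case: vdelta => [[[[q g] x] m1] m2] /=.
by case: m1 => /=; lia.
Qed.

Lemma reach_coins_le_steps (P : prover V) (c : config V) :
  reach w P c -> cprivs c <= csteps c /\ cpubs c <= csteps c.
Proof.
elim=> //= d bp bq _ [le_priv le_pub] _.
by rewrite step_cprivs step_cpubs step_csteps; case: vpriv; case: vpub; lia.
Qed.

Lemma reach_run (P : prover V) (c : config V) : reach w P c ->
  exists (f : nat -> config V) (es : nat -> outcome),
  [/\ f 0 = init V, f (csteps c) = c,
      forall i, i < csteps c ->
        f i.+1 = step_reply (f i) (es i) /\ ~~ halted (f i)
    & forall i, i <= csteps c -> reach w P (f i)].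
Proof.
elim=> [|d bp bq reach_d [f [es [f0 fd run reach_f]]] not_halted].
  exists (fun _ => init V), (fun _ => (false, false, vcblank V)).
  by split=> // i /=; rewrite ?ltn0 // => _; exact: reach0.
set d' := step w P d bp bq; rewrite step_csteps.
exists (fun i => if i <= csteps d then f i else d'),
  (fun i => if i == csteps d then (bp, bq, ccell d') else es i); split.
- by rewrite leq0n.
- by rewrite ltnn.
- move=> i; rewrite ltnS => le_i.
  case: (ltngtP i (csteps d)) le_i => [lt_i _ | // | -> _].
  + exact: run.
  + by rewrite fd; split=> //; exact: step_replyE.
- by move=> i _; case: ifP => [le_i | _]; [exact: reach_f | exact: reachS].
Qed.

Fixpoint replay (c0 : config V) (es : nat -> outcome) (k : nat) : config V :=
  if k is k'.+1 then step_reply (replay c0 es k') (es k') else c0.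

Lemma replay_csteps c0 es k : csteps (replay c0 es k) = csteps c0 + k.
Proof. by elim: k => [|k IH] /=; rewrite ?addn0 // step_csteps IH addnS. Qed.

Section BoundedSpace.
Variable B : nat.
Hypothesis space_bound :
  forall (P : prover V) (c : config V), reach w P c -> cwh c <= B.

Lemma replay_cycle (f : nat -> config V) es a b :
  (forall i, i < b -> f i.+1 = step_reply (f i) (es i) /\ ~~ halted (f i)) ->
  (forall i, i <= b -> reachable (f i)) -> a < b -> agree B (f a) (f b) ->
  forall k, let c := replay (f a) (fun j => es (a + j %% (b - a))) k in
    agree B (f (a + k %% (b - a))) c /\ reachable c.
Proof.
move=> run reach_f lt_ab agree_ab.
have L_gt0 : 0 < b - a by rewrite subn_gt0.
set es' := fun j => es (a + j %% (b - a)).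
elim=> [|k [agree_k reach_k]] /=.
  by rewrite mod0n addn0; split; [exact: agree_refl | apply: reach_f; lia].
set i := a + k %% (b - a).
have lt_ib : i < b by have := ltn_pmod k L_gt0; rewrite /i; lia.
have [f_iS not_halted] := run i lt_ib.
split; last by apply: reachable_step_reply; rewrite // -(halted_agree agree_k).
have agree_iS : agree B (f i.+1) (step_reply (replay (f a) es' k) (es i)).
  rewrite f_iS; apply: agree_step_reply agree_k.
  by have [P reach_i] := reach_f i (ltnW lt_ib); exact: space_bound reach_i.
rewrite cycle_indexS // -/i; case: eqP => [iS_b | _] //.
by rewrite iS_b in agree_iS; exact: agree_trans agree_ab agree_iS.
Qed.

Lemma steps_lt_card_local_config T (P : prover V) (c : config V) :
  (forall (P : prover V) (c : config V), reach w P c -> csteps c <= T) ->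
  reach w P c -> csteps c < #|local_config (size w) B|.
Proof.
move=> time_bound reach_c; have [f [es [_ fc run reach_f]]] := reach_run reach_c.
rewrite ltnNge; apply/negP => /(exists_repeat (local_view (size w) B \o f)).
case=> a [b [lt_ab le_b /= eq_view]].
have reach_fb : forall i, i <= b -> reach w P (f i).
  by move=> i le_i; apply: reach_f; lia.
have agree_ab : agree B (f a) (f b).
  by apply: agree_local_view eq_view;
    [apply: reach_cih | apply: reach_cih |
     apply: space_bound | apply: space_bound];
    apply: reach_fb; lia.
have [_ [P' reach_pumped]] :=
  replay_cycle (fun i lt_i => run i (leq_trans lt_i le_b))
  (fun i le_i => ex_intro _ P (reach_fb i le_i)) lt_ab agree_ab T.+1.
by have := time_bound _ _ reach_pumped; rewrite replay_csteps; lia.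
Qed.

End BoundedSpace.
End Input.

Lemma bigO_card_local_config (gs : nat -> nat) :
  bigO gs (fun _ => 1) -> bigO (fun n => #|local_config n (gs n)|) (fun n => n).
Proof.
case=> B [n0 le_gs].
exists (#|vQ V| * 3 * expn #|vG V| B.+1 * B.+1 * #|vC V|), (maxn n0 1) => n.
rewrite geq_max => /andP [le_n0 n_gt0]; rewrite card_local_config.
have gs_le : gs n <= B by rewrite -[B]muln1 le_gs.
have vG_gt0 : 0 < #|vG V| by apply/card_gt0P; exists (vblank V).
have le_n2 : n.+2 <= 3 * n by lia.
apply: (@leq_trans (#|vQ V| * (3 * n) * expn #|vG V| B.+1 * B.+1 * #|vC V|)).
  by rewrite !leq_mul ?leq_pexp2l.
by apply: eq_leq; lia.
Qed.

End Verifier.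

Lemma within_bounds_linear (Sigma : Type) (V : verifier Sigma) (t : nat -> nat) :
  within_bounds V (left_bounds t) -> within_bounds V right_bounds.
Proof.
case=> [[gs [O_gs space]] [_ [_ [gt [_ time]]]]].
have steps_lt : forall w (P : prover V) c,
    reach w P c -> csteps c < #|local_config V (size w) (gs (size w))|.
  by move=> w P c; apply: (steps_lt_card_local_config (space w) (time w)).
have O_card := bigO_card_local_config V O_gs.
split; first by exists gs.
split; [|split]; exists (fun n => #|local_config V n (gs n)|);
  split=> // w P c reach_c; have := steps_lt _ _ _ reach_c;
  have := reach_coins_le_steps reach_c; lia.
Qed.

Theorem theorem3 (Sigma : finType) (t : nat -> nat) (L : seq Sigma -> Prop) :
  (IP (left_bounds t) L -> IP right_bounds L) /\
  (IP_high (left_bounds t) L -> IP_high right_bounds L).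
Proof.
split.
- move=> IP_L eps eps_gt0; have [V [bounds_V verifies_V]] := IP_L eps eps_gt0.
  by exists V; split=> //; exact: within_bounds_linear bounds_V.
- case=> V [bounds_V verifies_V]; exists V; split=> //.
  exact: within_bounds_linear bounds_V.
Qed.
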